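(* In the block regularized minimum distance (RMD) setting of the context, suppose conditions (B1)–(B4) hold. If $\|\boldsymbol\theta_0\|_1^{(d,\tilde d)}\le K$ and the regularization parameter satisfies $\gamma_n\lesssim(K+1)\epsilon_{n1}+\epsilon_2$, then with probability at least $1-(\delta_{n1}+\delta_{n2})$ the block RMD estimator $\widehat{\boldsymbol\theta}$ satisfies $$\|\widehat{\boldsymbol\theta}-\boldsymbol\theta_0\|_1^{(d,\tilde d)}\lesssim s\mu^{-2}\{(K+1)\epsilon_{n1}+\epsilon_2\}.$$
   Context: Block norms: for a block matrix $\mathbf B=(\mathbf B_{ij})_{i\in[N_1],j\in[N_2]}$ with blocks $\mathbf B_{ij}\in\mathbb R^{m_1\times m_2}$, $\|\mathbf B\|^{(m_1,m_2)}_{\max}=\max_{i,j}\|\mathbf B_{ij}\|_F$; if $N_2=1$, $\|\mathbf B\|^{(m_1,m_2)}_1=\sum_i\|\mathbf B_i\|_F$. Setting: integers $p,d,\tilde d,L\ge1$, $q=pL$. The unknown $\boldsymbol\theta_0=(\boldsymbol\theta_{01}^{\mathrm T},\dots,\boldsymbol\theta_{0p}^{\mathrm T})^{\mathrm T}\in\mathbb R^{pd\times\tilde d}$, $\boldsymbol\theta_{0j}\in\mathbb R^{d\times\tilde d}$, is block $s$-sparse: $S=\{j:\|\boldsymbol\theta_{0j}\|_F\ne0\}$, $s=|S|$. There are a matrix $\mathbf G\in\mathbb R^{qd\times pd}$ (viewed as $q\times p$ blocks of size $d\times d$), $\mathbf g(\mathbf 0)\in\mathbb R^{qd\times\tilde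 d}$ and a bias $\mathbf R\in\mathbb R^{qd\times\tilde d}$ with $\mathbf G\boldsymbol\theta_0+\mathbf g(\mathbf 0)+\mathbf R=\mathbf 0$; write $\mathbf g(\boldsymbol\theta)=\mathbf G\boldsymbol\theta+\mathbf g(\mathbf 0)$. Given random empirical versions $\widehat{\mathbf G},\widehat{\mathbf g}(\mathbf 0)$ and $\widehat{\mathbf g}(\boldsymbol\theta)=\widehat{\mathbf G}\boldsymbol\theta+\widehat{\mathbf g}(\mathbf 0)$, the block RMD estimator is a solution $$\widehat{\boldsymbol\theta}\in\arg\min_{\boldsymbol\theta\in\mathbb R^{pd\times\tilde d}}\|\boldsymbol\theta\|_1^{(d,\tilde d)}\ \text{ subject to }\ \|\widehat{\mathbf g}(\boldsymbol\theta)\|^{(d,\tilde d)}_{\max}\le\gamma_n,$$ with $\gamma_n\ge0$. For $J\subset[q]$, $M\subset[p]$, $\mathbf G_{J,M}$ is the block submatrix with block rows in $J$ and block columns in $M$; $\sigma_{\min}(m,\mathbf G)=\min_{|M|\le m}\max_{|J|\le m}\sigma_{\min}(\mathbf G_{J,M})$ and $\sigma_{\max}(m,\mathbf G)=\max_{|M|\le m}\max_{|J|\le m}\sigma_{\max}(\mathbf G_{J,M})$, where $\sigma_{\min},\sigma_{\max}$ denote smallest and largest singular values. Conditions: (B1) there are $\epsilon_{n1},\delta_{n1}>0$ with $\|\widehat{\mathbf G}-\mathbf G\|^{(d,d)}_{\max}\vee\|\widehat{\mathbf g}(\mathbf 0)-\mathbf g(\mathbf 0)\|^{(d,\tilde d)}_{\max}\le\epsilon_{n1}$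 with probability at least $1-\delta_{n1}$. (B2) $\|\mathbf R\|^{(d,\tilde d)}_{\max}\le\epsilon_2$ for some $\epsilon_2>0$. (B3) there is $\delta_{n2}>0$ with $\|\widehat{\mathbf g}(\boldsymbol\theta_0)\|^{(d,\tilde d)}_{\max}\le\gamma_n$ with probability at least $1-\delta_{n2}$. (B4) there are a universal constant $c_5>0$ and $\mu>0$ with $\sigma_{\max}(m,\mathbf G)\ge c_5$ and $\sigma_{\min}(m,\mathbf G)/\sigma_{\max}(m,\mathbf G)\ge\mu$ for $m=16s/\mu^2$. The symbol $\lesssim$ hides constants independent of $(n,p,d,s,K,\mu)$. *)

From HB Require Import structures.
From mathcomp Require Import all_boot all_order all_algebra.
From mathcomp Require Import all_classical all_reals all_analysis.
Set Implicit Arguments. Unset Strict Implicit. Unset Printing Implicit Defensive.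
Import Order.TTheory GRing.Theory Num.Theory.
Local Open Scope classical_set_scope.
Local Open Scope ring_scope.

Section BlockDefs.
Variable R : realType.

Definition frob (a b : nat) (A : 'M[R]_(a, b)) : R :=
  Num.sqrt (\sum_(i < a) \sum_(j < b) A i j ^+ 2).

(* A block column matrix with n blocks of size a x b is represented by the
   family of its blocks; ||B||_1^{(a,b)} = sum of Frobenius norms of blocks. *)
Definition bnorm1 (n a b : nat) (B : 'I_n -> 'M[R]_(a, b)) : R :=
  \sum_(i < n) frob (B i).

Definition bnormmax (n a b : nat) (B : 'I_n -> 'M[R]_(a, b)) : R :=
  \big[Num.max/0]_(i < n) frob (B i).

Definition bnormmax2 (n1 n2 a b : nat) (B : 'I_n1 -> 'I_n2 -> 'M[R]_(a, b)) : R :=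
  \big[Num.max/0]_(i < n1) \big[Num.max/0]_(j < n2) frob (B i j).

Definition bapply (q p d dt : nat) (G : 'I_q -> 'I_p -> 'M[R]_(d, d))
    (th : 'I_p -> 'M[R]_(d, dt)) : 'I_q -> 'M[R]_(d, dt) :=
  fun i => \sum_(j < p) G i j *m th j.

Definition gfun (q p d dt : nat) (G : 'I_q -> 'I_p -> 'M[R]_(d, d))
    (g0 : 'I_q -> 'M[R]_(d, dt)) (th : 'I_p -> 'M[R]_(d, dt)) :
    'I_q -> 'M[R]_(d, dt) :=
  fun i => bapply G th i + g0 i.

Definition bsupp (p d dt : nat) (th : 'I_p -> 'M[R]_(d, dt)) : {set 'I_p} :=
  [set j | frob (th j) != 0].

Definition subnorm (q p d : nat) (G : 'I_q -> 'I_p -> 'M[R]_(d, d))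
    (J : {set 'I_q}) (M : {set 'I_p}) (x : 'I_p -> 'cV[R]_d) : R :=
  Num.sqrt (\sum_(i in J) frob (\sum_(j in M) G i j *m x j) ^+ 2).

Definition vnorm (p d : nat) (M : {set 'I_p}) (x : 'I_p -> 'cV[R]_d) : R :=
  Num.sqrt (\sum_(j in M) frob (x j) ^+ 2).

(* Smallest / largest singular value of the block submatrix G_{J,M}
   (a (|J| d) x (|M| d) matrix), variationally:
   sigma_min = inf_{x <> 0} |G_{J,M} x| / |x|,
   sigma_max = sup_{x <> 0} |G_{J,M} x| / |x|. *)
Definition sv_min (q p d : nat) (G : 'I_q -> 'I_p -> 'M[R]_(d, d))
    (J : {set 'I_q}) (M : {set 'I_p}) : R :=
  inf [set subnorm G J M x / vnorm M x | x in [set x | vnorm M x != 0]].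

Definition sv_max (q p d : nat) (G : 'I_q -> 'I_p -> 'M[R]_(d, d))
    (J : {set 'I_q}) (M : {set 'I_p}) : R :=
  sup [set subnorm G J M x / vnorm M x | x in [set x | vnorm M x != 0]].

Definition sigma_min_m (q p d : nat) (m : R) (G : 'I_q -> 'I_p -> 'M[R]_(d, d)) : R :=
  inf [set v | exists M : {set 'I_p}, [/\ (0 < #|M|)%N, (#|M|%:R <= m)
     & v = sup [set sv_min G J M | J in [set J : {set 'I_q} | #|J|%:R <= m]]]].

Definition sigma_max_m (q p d : nat) (m : R) (G : 'I_q -> 'I_p -> 'M[R]_(d, d)) : R :=
  sup [set v | exists M : {set 'I_p}, exists J : {set 'I_q},
     [/\ #|M|%:R <= m, #|J|%:R <= m & v = sv_max G J M]].

Definition is_rmd (q p d dt : nat) (Gh : 'I_q -> 'I_p -> 'M[R]_(d, d))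
    (gh0 : 'I_q -> 'M[R]_(d, dt)) (gam : R) (th : 'I_p -> 'M[R]_(d, dt)) : Prop :=
  bnormmax (gfun Gh gh0 th) <= gam /\
  forall th' : 'I_p -> 'M[R]_(d, dt),
    bnormmax (gfun Gh gh0 th') <= gam -> bnorm1 th <= bnorm1 th'.

End BlockDefs.

From HB Require Import structures.
From mathcomp Require Import all_boot all_order all_algebra.
From mathcomp Require Import all_classical all_reals all_analysis.
From mathcomp Require Import ring lra zify.
Import Order.TTheory GRing.Theory Num.Theory.
Local Open Scope classical_set_scope.
Local Open Scope ring_scope.
Set Implicit Arguments. Unset Strict Implicit. Unset Printing Implicit Defensive.

(* On the intersection of the events of (B1) and (B3), theta0 is
   feasible, so the minimality of the estimator gives |theta_hat|_1 <= |theta0|_1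
   <= K.  This forces the error h = theta_hat - theta0 into the cone
   |h_{S^c}|_1 <= |h_S|_1, and the triangle inequality bounds every block of G h
   by lam = gamma + eps1 K + eps1 + eps2 <= (C1 + 1) ((K + 1) eps1 + eps2).
   A restricted-eigenvalue argument concludes: let M be S together with the
   k ~ 8 s / mu^2 largest blocks of h outside S, and J a set of block rows with
   sigma_min(G_{J,M}) >= 3/4 mu sigma_max(m, G).  The remaining blocks, peeled
   off in shells of k, contribute at most sigma_max |h_S|_1 / sqrt k to
   |G_{J,.} h_{M^c}|, which is half of sigma_min |h_M|_2; hence
   |h_M|_2 <= 2 sqrt m lam / sigma_min and |h|_1 <= 2 sqrt s |h_M|_2 is of
   order s lam / (mu^2 c5). *)

Section SumsOfSquares.
Variable R : realDomainType.

Lemma sumr_sqr_ge0 (I : finType) (P : pred I) (u : I -> R) : 0 <= \sum_(i | P i) u i ^+ 2.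
Proof. by apply: sumr_ge0 => i _; exact: sqr_ge0. Qed.

Lemma ler_sum_sub (I : finType) (P Q : pred I) (F : I -> R) :
  (forall i, P i -> Q i) -> (forall i, 0 <= F i) ->
  \sum_(i | P i) F i <= \sum_(i | Q i) F i.
Proof.
move=> PQ F0; rewrite [X in _ <= X](bigID P) /=.
have -> : \sum_(i | Q i && P i) F i = \sum_(i | P i) F i.
  by apply: eq_bigl => i; case Pi: (P i); rewrite ?andbF ?andbT ?PQ.
by rewrite lerDl sumr_ge0.
Qed.

(* Lagrange's identity: the defect is half the sum of the squares (u_i v_j - u_j v_i)^2. *)
Lemma cauchy_schwarz_sum (I : finType) (P : pred I) (u v : I -> R) :
  (\sum_(i | P i) u i * v i) ^+ 2 <=
  (\sum_(i | P i) u i ^+ 2) * (\sum_(i | P i) v i ^+ 2).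
Proof.
set U := \sum_(i | P i) u i ^+ 2; set V := \sum_(i | P i) v i ^+ 2.
have defect_ge0 : 0 <= \sum_(i | P i) \sum_(j | P j) (u i * v j - u j * v i) ^+ 2.
  by apply: sumr_ge0 => i _; exact: sumr_sqr_ge0.
have UV : \sum_(i | P i) \sum_(j | P j) u i ^+ 2 * v j ^+ 2 = U * V.
  by rewrite mulr_suml; apply: eq_bigr => i _; rewrite mulr_sumr.
have VU : \sum_(i | P i) \sum_(j | P j) u j ^+ 2 * v i ^+ 2 = U * V.
  by rewrite exchange_big.
have W2 : \sum_(i | P i) \sum_(j | P j) u i * v i * (u j * v j) =
    (\sum_(i | P i) u i * v i) ^+ 2.
  by rewrite expr2 mulr_suml; apply: eq_bigr => i _; rewrite mulr_sumr.
suff lagrange : \sum_(i | P i) \sum_(j | P j) (u i * v j - u j * v i) ^+ 2 =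
    U * V + U * V - 2 * (\sum_(i | P i) u i * v i) ^+ 2 by lra.
rewrite -{1}UV -VU -W2 -big_split /= mulr_sumr -sumrB; apply: eq_bigr => i _.
by rewrite -big_split /= mulr_sumr -sumrB; apply: eq_bigr => j _; ring.
Qed.

Lemma sqr_sumr_le_card (I : finType) (A : {pred I}) (u : I -> R) :
  (\sum_(i in A) u i) ^+ 2 <= #|A|%:R * \sum_(i in A) u i ^+ 2.
Proof.
have := cauchy_schwarz_sum (mem A) u (fun _ => 1).
by under eq_bigr do rewrite mulr1; under [X in _ * X]eq_bigr do rewrite expr1n;
  rewrite sumr_const mulrC.
Qed.

End SumsOfSquares.

Section SqrtSums.
Variable R : rcfType.

Lemma minkowski_sum (I : finType) (P : pred I) (u v : I -> R) :
  Num.sqrt (\sum_(i | P i) (u i + v i) ^+ 2) <=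
  Num.sqrt (\sum_(i | P i) u i ^+ 2) + Num.sqrt (\sum_(i | P i) v i ^+ 2).
Proof.
set a := \sum_(i | P i) u i ^+ 2; set b := \sum_(i | P i) v i ^+ 2.
have a0 : 0 <= a by exact: sumr_sqr_ge0.
have b0 : 0 <= b by exact: sumr_sqr_ge0.
rewrite -ler_sqr ?nnegrE ?addr_ge0 ?sqrtr_ge0 // sqr_sqrtr ?sumr_sqr_ge0 //.
have -> : \sum_(i | P i) (u i + v i) ^+ 2 = a + b + 2 * \sum_(i | P i) u i * v i.
  rewrite /a /b -big_split /= mulr_sumr -big_split /=; apply: eq_bigr => i _; ring.
have uv : \sum_(i | P i) u i * v i <= Num.sqrt a * Num.sqrt b.
  rewrite -sqrtrM // -(ger0_norm (mulr_ge0 a0 b0)); apply: le_trans (ler_norm _) _.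
  by rewrite -sqrtr_sqr ler_sqrt ?normr_ge0 // ger0_norm ?mulr_ge0 // cauchy_schwarz_sum.
have := sqr_sqrtr a0; have := sqr_sqrtr b0; nra.
Qed.

Lemma sqrt_sumr_sqr_le_sum (I : finType) (P : pred I) (f : I -> R) :
  (forall i, P i -> 0 <= f i) ->
  Num.sqrt (\sum_(i | P i) f i ^+ 2) <= \sum_(i | P i) f i.
Proof.
move=> f0; suff [] : 0 <= \sum_(i | P i) f i ^+ 2 /\
    Num.sqrt (\sum_(i | P i) f i ^+ 2) <= \sum_(i | P i) f i by [].
apply: (big_ind2 (fun x y => 0 <= x /\ Num.sqrt x <= y)); first by rewrite sqrtr0.
  move=> a1 b1 a2 b2 [a1_ge0 le1] [a2_ge0 le2]; split; first exact: addr_ge0.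
  apply: le_trans (lerD le1 le2).
  rewrite -ler_sqr ?nnegrE ?addr_ge0 ?sqrtr_ge0 // sqr_sqrtr ?addr_ge0 //.
  rewrite sqrrD !sqr_sqrtr //.
  have := mulr_ge0 (sqrtr_ge0 a1) (sqrtr_ge0 a2); rewrite mulr2n; lra.
by move=> i Pi; rewrite sqr_ge0 sqrtr_sqr ger0_norm ?f0.
Qed.

End SqrtSums.

Section Frobenius.
Variable R : realType.

Lemma frobE (a b : nat) (A : 'M[R]_(a, b)) :
  frob A = Num.sqrt (\sum_(ij : 'I_a * 'I_b) A ij.1 ij.2 ^+ 2).
Proof. by rewrite /frob pair_bigA. Qed.

Lemma frob_sqr (a b : nat) (A : 'M[R]_(a, b)) :
  frob A ^+ 2 = \sum_i \sum_j A i j ^+ 2.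
Proof. by rewrite /frob sqr_sqrtr //; apply: sumr_ge0 => i _; exact: sumr_sqr_ge0. Qed.

Lemma frob_sqr_col (a b : nat) (A : 'M[R]_(a, b)) :
  frob A ^+ 2 = \sum_c frob (col c A) ^+ 2.
Proof.
rewrite frob_sqr exchange_big; apply: eq_bigr => c _.
by rewrite frob_sqr; apply: eq_bigr => i _; rewrite big_ord1 mxE.
Qed.

Lemma frob_ge0 (a b : nat) (A : 'M[R]_(a, b)) : 0 <= frob A.
Proof. exact: sqrtr_ge0. Qed.

Lemma frob0 (a b : nat) : frob (0 : 'M[R]_(a, b)) = 0.
Proof. by rewrite frobE big1 ?sqrtr0 // => ij _; rewrite mxE expr0n. Qed.

Lemma frob_eq0 (a b : nat) (A : 'M[R]_(a, b)) : frob A = 0 -> A = 0.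
Proof.
rewrite frobE => /eqP; rewrite sqrtr_eq0 => le0.
have /psumr_eq0P A0 : \sum_(ij : 'I_a * 'I_b) A ij.1 ij.2 ^+ 2 = 0.
  by apply/eqP; rewrite eq_le le0 sumr_sqr_ge0.
apply/matrixP => i j; apply/eqP; rewrite mxE -sqrf_eq0.
by rewrite (A0 (fun _ _ => sqr_ge0 _) (i, j)).
Qed.

Lemma frobN (a b : nat) (A : 'M[R]_(a, b)) : frob (- A) = frob A.
Proof. by rewrite !frobE; congr Num.sqrt; apply: eq_bigr => ij _; rewrite mxE sqrrN. Qed.

Lemma frobD (a b : nat) (A B : 'M[R]_(a, b)) : frob (A + B) <= frob A + frob B.
Proof. by rewrite !frobE; under eq_bigr do rewrite mxE; exact: minkowski_sum. Qed.

Lemma frobB (a b : nat) (A B : 'M[R]_(a, b)) : frob (A - B) <= frob A + frob B.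
Proof. by rewrite -(frobN B); exact: frobD. Qed.

Lemma frob_sum (a b : nat) (I : finType) (P : pred I) (F : I -> 'M[R]_(a, b)) :
  frob (\sum_(i | P i) F i) <= \sum_(i | P i) frob (F i).
Proof.
apply: (big_ind2 (fun A x => frob A <= x)); first by rewrite frob0.
by move=> A1 x1 A2 x2 le1 le2; apply: le_trans (frobD _ _) (lerD le1 le2).
by [].
Qed.

Lemma frobM (a b c : nat) (A : 'M[R]_(a, b)) (B : 'M[R]_(b, c)) :
  frob (A *m B) <= frob A * frob B.
Proof.
rewrite -[X in _ <= X]ger0_norm ?mulr_ge0 ?frob_ge0 // -sqrtr_sqr.
rewrite /frob ler_sqrt ?sqr_ge0 // exprMn !frob_sqr mulr_suml.
apply: ler_sum => i _; rewrite exchange_big mulr_sumr; apply: ler_sum => k _.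
by rewrite mxE; exact: cauchy_schwarz_sum.
Qed.

Lemma le_bnormmax (n a b : nat) (B : 'I_n -> 'M[R]_(a, b)) i :
  frob (B i) <= bnormmax B.
Proof. exact: le_bigmax. Qed.

Lemma le_bnormmax2 (n1 n2 a b : nat) (B : 'I_n1 -> 'I_n2 -> 'M[R]_(a, b)) i j :
  frob (B i j) <= bnormmax2 B.
Proof. by apply: le_trans (le_bigmax _ _ i); exact: le_bigmax. Qed.

Lemma bnorm1_ge0 (n a b : nat) (B : 'I_n -> 'M[R]_(a, b)) : 0 <= bnorm1 B.
Proof. by apply: sumr_ge0 => i _; exact: frob_ge0. Qed.

End Frobenius.

Section BlockL2.
Variables (R : realType) (q p d : nat) (G : 'I_q -> 'I_p -> 'M[R]_(d, d)).
Implicit Types (J : {set 'I_q}) (M : {set 'I_p}).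

Definition mxvnorm (dt : nat) (M : {set 'I_p}) (X : 'I_p -> 'M[R]_(d, dt)) : R :=
  Num.sqrt (\sum_(j in M) frob (X j) ^+ 2).

Definition mxsubnorm (dt : nat) (J : {set 'I_q}) (M : {set 'I_p})
    (X : 'I_p -> 'M[R]_(d, dt)) : R :=
  Num.sqrt (\sum_(i in J) frob (\sum_(j in M) G i j *m X j) ^+ 2).

Lemma mxvnorm_ge0 dt M (X : 'I_p -> 'M[R]_(d, dt)) : 0 <= mxvnorm M X.
Proof. exact: sqrtr_ge0. Qed.

Lemma mxsubnorm_ge0 dt J M (X : 'I_p -> 'M[R]_(d, dt)) : 0 <= mxsubnorm J M X.
Proof. exact: sqrtr_ge0. Qed.

Lemma mxvnorm_sqr dt M (X : 'I_p -> 'M[R]_(d, dt)) :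
  mxvnorm M X ^+ 2 = \sum_(j in M) frob (X j) ^+ 2.
Proof. by rewrite sqr_sqrtr ?sumr_sqr_ge0. Qed.

Lemma mxsubnorm_sqr dt J M (X : 'I_p -> 'M[R]_(d, dt)) :
  mxsubnorm J M X ^+ 2 = \sum_(i in J) frob (\sum_(j in M) G i j *m X j) ^+ 2.
Proof. by rewrite sqr_sqrtr ?sumr_sqr_ge0. Qed.

Lemma mxvnorm_sqr_col dt M (X : 'I_p -> 'M[R]_(d, dt)) :
  mxvnorm M X ^+ 2 = \sum_c vnorm M (fun j => col c (X j)) ^+ 2.
Proof.
under [RHS]eq_bigr do rewrite [vnorm _ _]/(mxvnorm _ _) mxvnorm_sqr.
by rewrite mxvnorm_sqr exchange_big; apply: eq_bigr => j _; rewrite frob_sqr_col.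
Qed.

Lemma mxsubnorm_sqr_col dt J M (X : 'I_p -> 'M[R]_(d, dt)) :
  mxsubnorm J M X ^+ 2 = \sum_c subnorm G J M (fun j => col c (X j)) ^+ 2.
Proof.
under [RHS]eq_bigr do rewrite [subnorm _ _ _ _]/(mxsubnorm _ _ _) mxsubnorm_sqr.
rewrite mxsubnorm_sqr exchange_big; apply: eq_bigr => i _; rewrite frob_sqr_col.
apply: eq_bigr => c _; congr (frob _ ^+ 2).
by rewrite colE mulmx_suml; apply: eq_bigr => j _; rewrite colE mulmxA.
Qed.

Lemma mxvnorm_le_card dt M (X : 'I_p -> 'M[R]_(d, dt)) t :
  0 <= t -> (forall j, j \in M -> frob (X j) <= t) ->
  mxvnorm M X <= Num.sqrt #|M|%:R * t.
Proof.
move=> t0 Xt; rewrite /mxvnorm -(ger0_norm t0) -sqrtr_sqr -sqrtrM // ler_sqrt ?mulr_ge0 //.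
rewrite mulr_natl -sumr_const; apply: ler_sum => j jM.
by rewrite ler_sqr ?nnegrE ?frob_ge0 ?Xt.
Qed.

Lemma sqr_sum_frob_le_mxvnorm dt (S M : {set 'I_p}) (X : 'I_p -> 'M[R]_(d, dt)) :
  S \subset M -> (\sum_(j in S) frob (X j)) ^+ 2 <= #|S|%:R * mxvnorm M X ^+ 2.
Proof.
move=> SM; apply: le_trans (sqr_sumr_le_card _ _) _.
rewrite mxvnorm_sqr ler_wpM2l ?ler0n //; apply: ler_sum_sub => [j|j]; last exact: sqr_ge0.
exact: (fintype.subsetP SM).
Qed.

Lemma mxsubnorm_setT_sqr_le dt J (X : 'I_p -> 'M[R]_(d, dt)) (lam : R) :
  0 <= lam -> (forall i, frob (\sum_j G i j *m X j) <= lam) ->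
  mxsubnorm J [set: 'I_p]%SET X ^+ 2 <= #|J|%:R * lam ^+ 2.
Proof.
move=> lam_ge0 GX_le; rewrite mxsubnorm_sqr mulr_natl -sumr_const.
apply: ler_sum => i _; rewrite ler_sqr ?nnegrE ?frob_ge0 //.
by under eq_bigl do rewrite finset.in_setT; exact: GX_le.
Qed.

Lemma mxsubnorm_le_sum dt J (M A B : {set 'I_p}) (X : 'I_p -> 'M[R]_(d, dt)) :
  (forall i, frob (\sum_(j in M) G i j *m X j) <=
     frob (\sum_(j in A) G i j *m X j) + frob (\sum_(j in B) G i j *m X j)) ->
  mxsubnorm J M X <= mxsubnorm J A X + mxsubnorm J B X.
Proof.
move=> leMAB; apply: le_trans (minkowski_sum _ _ _).
rewrite ler_sqrt ?sumr_sqr_ge0 //; apply: ler_sum => i _.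
by rewrite ler_sqr ?nnegrE ?addr_ge0 ?frob_ge0.
Qed.

Lemma mxsubnorm_setID dt J (W T : {set 'I_p}) (X : 'I_p -> 'M[R]_(d, dt)) :
  T \subset W -> mxsubnorm J W X <= mxsubnorm J T X + mxsubnorm J (W :\: T) X.
Proof.
move=> TW; apply: mxsubnorm_le_sum => i.
by rewrite (big_setID T) /= (finset.setIidPr TW); exact: frobD.
Qed.

Lemma mxsubnorm_setC dt J (M : {set 'I_p}) (X : 'I_p -> 'M[R]_(d, dt)) :
  mxsubnorm J M X <= mxsubnorm J [set: 'I_p]%SET X + mxsubnorm J (~: M) X.
Proof.
apply: mxsubnorm_le_sum => i.
have -> : \sum_(j in M) G i j *m X j =
    \sum_(j in [set: 'I_p]%SET) G i j *m X j - \sum_(j in ~: M) G i j *m X j.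
  by rewrite [X in _ = X - _](big_setID M) /= finset.setTI finset.setTD addrK.
exact: frobB.
Qed.

End BlockL2.

Section SupInfBounds.
Variable R : realType.

Lemma sup_ge0_le (S : set R) b :
  0 <= b -> lbound S 0 -> ubound S b -> 0 <= sup S <= b.
Proof.
move=> b0 S_ge0 S_le; have [[x Sx]|S0] := pselect (S !=set0).
  rewrite (ge_sup _ S_le) ?andbT; last by exists x.
  by apply: le_trans (S_ge0 _ Sx) (ub_le_sup _ Sx); exists b.
have -> : S = set0 by apply/seteqP; split => // x Sx; apply: S0; exists x.
by rewrite sup0 lexx.
Qed.

Lemma inf_ge0_le (S : set R) b :
  0 <= b -> lbound S 0 -> ubound S b -> 0 <= inf S <= b.
Proof.
move=> b0 S_ge0 S_le; have [[x Sx]|S0] := pselect (S !=set0).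
  rewrite (lb_le_inf _ S_ge0) /=; last by exists x.
  by apply: le_trans (ge_inf _ Sx) (S_le _ Sx); exists 0.
have -> : S = set0 by apply/seteqP; split => // x Sx; apply: S0; exists x.
by rewrite inf0 lexx.
Qed.

End SupInfBounds.

Section SingularValues.
Variables (R : realType) (q p d : nat) (G : 'I_q -> 'I_p -> 'M[R]_(d, d)).
Implicit Types (J : {set 'I_q}) (M : {set 'I_p}) (x : 'I_p -> 'cV[R]_d).

Definition bnorm11 : R := \sum_i \sum_j frob (G i j).

Lemma bnorm11_ge0 : 0 <= bnorm11.
Proof. by apply: sumr_ge0 => i _; apply: sumr_ge0 => j _; exact: frob_ge0. Qed.

Lemma frob_le_vnorm M x j : j \in M -> frob (x j) <= vnorm M x.
Proof.
move=> jM; rewrite -(ger0_norm (frob_ge0 (x j))) -sqrtr_sqr ler_sqrt ?sumr_sqr_ge0 //.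
by rewrite (bigD1 j) //= lerDl sumr_sqr_ge0.
Qed.

Lemma subnorm_le_bnorm11 J M x : subnorm G J M x <= bnorm11 * vnorm M x.
Proof.
have GxM_ge0 i j : 0 <= frob (G i j) * vnorm M x by rewrite mulr_ge0 ?frob_ge0 ?sqrtr_ge0.
rewrite /subnorm /bnorm11 mulr_suml.
apply: le_trans (sqrt_sumr_sqr_le_sum _) _ => [i _|]; first exact: frob_ge0.
apply: le_trans (_ : \sum_(i in J) \sum_(j in M) frob (G i j) * vnorm M x <= _).
  apply: ler_sum => i _; apply: le_trans (frob_sum _ _) _.
  apply: ler_sum => j jM; apply: le_trans (frobM _ _) _.
  by rewrite ler_wpM2l ?frob_ge0 ?frob_le_vnorm.
apply: le_trans (ler_sum_sub (Q := predT) _ _) _ => // [i|].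
  by apply: sumr_ge0 => j _.
by apply: ler_sum => i _; rewrite mulr_suml; exact: ler_sum_sub.
Qed.

Definition sv_ratios J M : set R :=
  [set subnorm G J M x / vnorm M x | x in [set x | vnorm M x != 0]].

Lemma sv_ratios_ge0 J M : lbound (sv_ratios J M) 0.
Proof. by move=> r [x _ <-]; rewrite divr_ge0 ?sqrtr_ge0. Qed.

Lemma sv_ratios_le J M : ubound (sv_ratios J M) bnorm11.
Proof.
move=> r [x /= xn0 <-].
by rewrite ler_pdivrMr ?subnorm_le_bnorm11 // lt0r xn0 sqrtr_ge0.
Qed.

Lemma sv_min_ge0_le J M : 0 <= sv_min G J M <= bnorm11.
Proof. by apply: inf_ge0_le; [exact: bnorm11_ge0 | exact: sv_ratios_ge0 | exact: sv_ratios_le]. Qed.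

Lemma sv_max_ge0_le J M : 0 <= sv_max G J M <= bnorm11.
Proof. by apply: sup_ge0_le; [exact: bnorm11_ge0 | exact: sv_ratios_ge0 | exact: sv_ratios_le]. Qed.

Lemma sv_min_mul J M x : sv_min G J M * vnorm M x <= subnorm G J M x.
Proof.
have [->|xn0] := eqVneq (vnorm M x) 0; first by rewrite mulr0 sqrtr_ge0.
rewrite -ler_pdivlMr ?lt0r ?xn0 ?sqrtr_ge0 //.
by apply: ge_inf; [exists 0; exact: sv_ratios_ge0 | exists x].
Qed.

Lemma sv_max_mul J M x : subnorm G J M x <= sv_max G J M * vnorm M x.
Proof.
have [x0|xn0] := eqVneq (vnorm M x) 0.
  by have := subnorm_le_bnorm11 J M x; rewrite x0 !mulr0.
rewrite -ler_pdivrMr ?lt0r ?xn0 ?sqrtr_ge0 //.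
by apply: ub_le_sup; [exists bnorm11; exact: sv_ratios_le | exists x].
Qed.

Lemma sv_min_le_max J M : (0 < d)%N -> (0 < #|M|)%N -> sv_min G J M <= sv_max G J M.
Proof.
move=> d_gt0 /card_gt0P[j jM].
pose x : 'I_p -> 'cV[R]_d := fun => const_mx 1.
have xn0 : vnorm M x != 0.
  apply/eqP => x0; have := frob_le_vnorm x jM; rewrite x0 => frob_le0.
  have /frob_eq0/matrixP/(_ (Ordinal d_gt0) ord0)/eqP : frob (x j) = 0.
    by apply/eqP; rewrite eq_le frob_le0 frob_ge0.
  by rewrite !mxE oner_eq0.
have x_gt0 : 0 < vnorm M x by rewrite lt0r xn0 sqrtr_ge0.
by rewrite -(ler_pM2r x_gt0); apply: le_trans (sv_min_mul _ _ _) (sv_max_mul _ _ _).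
Qed.

Lemma sv_min_mxmul dt J M (X : 'I_p -> 'M[R]_(d, dt)) :
  sv_min G J M * mxvnorm M X <= mxsubnorm G J M X.
Proof.
have [sv_ge0 _] := andP (sv_min_ge0_le J M).
rewrite -ler_sqr ?nnegrE ?mulr_ge0 ?mxvnorm_ge0 ?mxsubnorm_ge0 //.
rewrite exprMn mxsubnorm_sqr_col mxvnorm_sqr_col mulr_sumr; apply: ler_sum => c _.
by rewrite -exprMn ler_sqr ?nnegrE ?mulr_ge0 ?sqrtr_ge0 ?sv_min_mul.
Qed.

Lemma sv_max_mxmul dt J M (X : 'I_p -> 'M[R]_(d, dt)) :
  mxsubnorm G J M X <= sv_max G J M * mxvnorm M X.
Proof.
have [sv_ge0 _] := andP (sv_max_ge0_le J M).
rewrite -ler_sqr ?nnegrE ?mulr_ge0 ?mxvnorm_ge0 ?mxsubnorm_ge0 //.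
rewrite exprMn mxsubnorm_sqr_col mxvnorm_sqr_col mulr_sumr; apply: ler_sum => c _.
by rewrite -exprMn ler_sqr ?nnegrE ?mulr_ge0 ?sqrtr_ge0 ?sv_max_mul.
Qed.

End SingularValues.

Section SparseSingularValues.
Variables (R : realType) (q p d : nat) (G : 'I_q -> 'I_p -> 'M[R]_(d, d)) (m : R).
Hypothesis m_ge0 : 0 <= m.
Implicit Types (J : {set 'I_q}) (M : {set 'I_p}).

Definition sv_min_rows M : set R :=
  [set sv_min G J M | J in [set J : {set 'I_q} | #|J|%:R <= m]].

Lemma sv_min_rows_has_sup M : has_sup (sv_min_rows M).
Proof.
split; first by exists (sv_min G finset.set0 M), finset.set0; rewrite //= cards0.
by exists (bnorm11 G) => _ [J _ <-]; case/andP: (sv_min_ge0_le G J M).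
Qed.

Lemma sv_min_rows_sup_ge0 M : 0 <= sup (sv_min_rows M).
Proof.
have [] := andP (@sup_ge0_le _ (sv_min_rows M) (bnorm11 G) (bnorm11_ge0 G) _ _) => //.
  by move=> _ [J _ <-]; case/andP: (sv_min_ge0_le G J M).
by move=> _ [J _ <-]; case/andP: (sv_min_ge0_le G J M).
Qed.

Lemma sigma_min_m_le_sup M :
  (0 < #|M|)%N -> #|M|%:R <= m -> sigma_min_m m G <= sup (sv_min_rows M).
Proof.
move=> M_gt0 Mm; apply: ge_inf; last by exists M.
by exists 0 => _ [M' [_ _ ->]]; exact: sv_min_rows_sup_ge0.
Qed.

Lemma sv_min_rows_approx M eps : 0 < eps ->
  exists2 J : {set 'I_q}, #|J|%:R <= m & sup (sv_min_rows M) - eps < sv_min G J M.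
Proof.
by move=> eps_gt0; have [_ [J Jm <-] ?] := sup_adherent eps_gt0 (sv_min_rows_has_sup M);
  exists J.
Qed.

Lemma sv_max_le_sigma_max_m J M :
  #|M|%:R <= m -> #|J|%:R <= m -> sv_max G J M <= sigma_max_m m G.
Proof.
move=> Mm Jm; apply: ub_le_sup; last by exists M, J.
by exists (bnorm11 G) => _ [M' [J' [_ _ ->]]]; case/andP: (sv_max_ge0_le G J' M').
Qed.

Lemma sigma_min_m_gt0_support :
  0 < sigma_min_m m G -> exists M, (0 < #|M|)%N /\ #|M|%:R <= m.
Proof.
move=> sm_gt0; apply: contrapT => noM; move: sm_gt0.
suff -> : sigma_min_m m G = 0 by rewrite ltxx.
rewrite /sigma_min_m -(inf0 R); congr inf.
by apply/seteqP; split => // v [M [M_gt0 Mm _]]; apply: noM; exists M.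
Qed.

Lemma sigma_min_m_le_max :
  (0 < d)%N -> 0 < sigma_min_m m G -> sigma_min_m m G <= sigma_max_m m G.
Proof.
move=> d_gt0 /sigma_min_m_gt0_support[M [M_gt0 Mm]].
apply: le_trans (sigma_min_m_le_sup M_gt0 Mm) _.
apply: ge_sup; first by case: (sv_min_rows_has_sup M).
move=> _ [J /= Jm <-]; apply: le_trans (sv_min_le_max G J d_gt0 M_gt0) _.
exact: sv_max_le_sigma_max_m.
Qed.

End SparseSingularValues.

Lemma topk_subset (I : finType) (disp : Order.disp_t) (T : orderType disp)
    (a : I -> T) (U : {set I}) (k : nat) :
  (k <= #|U|)%N -> exists S : {set I},
    [/\ S \subset U, #|S| = k & forall i j, i \in S -> j \in U :\: S -> (a j <= a i)%O].
Proof.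
elim: k => [|k IHk] k_le.
  by exists finset.set0; rewrite finset.sub0set cards0; split=> // i j; rewrite inE.
have [S [SU cardS S_top]] := IHk (ltnW k_le).
have : (0 < #|U :\: S|)%N by rewrite cardsD (finset.setIidPr SU) cardS subn_gt0.
case/card_gt0P => j1 j1_in.
have [j0 j0_in j0_max] := arg_maxP a j1_in.
have {}j0_max j : j \in U :\: S -> (a j <= a j0)%O := j0_max j.
move: (j0_in : j0 \in U :\: S); rewrite !inE => /andP[j0S j0U].
exists (j0 |: S); split.
- by rewrite finset.subUset finset.sub1set j0U SU.
- by rewrite cardsU1 j0S cardS.
move=> i j; rewrite !inE negb_or => /orP[/eqP-> | iS] /andP[/andP[_ jS] jU].
  by apply: j0_max; rewrite inE jS jU.
by apply: S_top; rewrite // inE jS jU.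
Qed.

Section Shelling.
Variables (R : realType) (q p d dt : nat) (G : 'I_q -> 'I_p -> 'M[R]_(d, d)).
Variables (J : {set 'I_q}) (X : 'I_p -> 'M[R]_(d, dt)) (k : nat) (sig : R).
Hypotheses (k_gt0 : (0 < k)%N) (sig_ge0 : 0 <= sig).
Hypothesis sparse_gain :
  forall T : {set 'I_p}, (#|T| <= k)%N -> mxsubnorm G J T X <= sig * mxvnorm T X.

Lemma mxsubnorm_dominated (V : {set 'I_p}) t :
  (#|V| <= k)%N -> 0 <= t -> (forall j, j \in V -> frob (X j) <= t) ->
  mxsubnorm G J V X * Num.sqrt k%:R <= sig * (k%:R * t).
Proof.
move=> Vk t_ge0 Vt.
have SN_le : mxsubnorm G J V X <= sig * (Num.sqrt k%:R * t).
  apply: le_trans (sparse_gain Vk) _; rewrite ler_wpM2l //.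
  apply: le_trans (mxvnorm_le_card t_ge0 Vt) _.
  by rewrite ler_wpM2r // ler_sqrt ?ler0n // ler_nat.
apply: le_trans (ler_wpM2r (sqrtr_ge0 _) SN_le) _; set s := Num.sqrt _.
have -> : sig * (s * t) * s = sig * (s ^+ 2 * t) by ring.
by rewrite sqr_sqrtr ?ler0n.
Qed.

(* Peel off the next k largest blocks of W \ T; each of them is at most the
   average of the k blocks of T. *)
Lemma mxsubnorm_tail (W T : {set 'I_p}) :
  T \subset W -> #|T| = minn k #|W| ->
  (forall i j, i \in T -> j \in W :\: T -> frob (X j) <= frob (X i)) ->
  mxsubnorm G J (W :\: T) X * Num.sqrt k%:R <= sig * \sum_(j in W) frob (X j).
Proof.
have sum_ge0 (V : {set 'I_p}) : 0 <= \sum_(j in V) frob (X j).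
  by apply: sumr_ge0 => j _; exact: frob_ge0.
elim: #|W|.+1 {-2}W (ltnSn #|W|) T => // n IHn {}W cardW {}T TW cardT T_top.
have [Wk|kW] := ltnP #|W| k.
  have /eqP TW_eq : T == W by rewrite finset.eqEcard TW cardT (minn_idPr (ltnW Wk)) leqnn.
  have WT0 j : j \in W :\: T -> frob (X j) <= 0 by rewrite TW_eq finset.setDv inE.
  apply: le_trans (mxsubnorm_dominated _ (lexx 0) WT0) _.
    by rewrite TW_eq finset.setDv cards0.
  by rewrite mulr0 mulr0 mulr_ge0.
move: cardT; rewrite (minn_idPl kW) => cardT.
set t := (\sum_(j in T) frob (X j)) / k%:R.
have kt : k%:R * t = \sum_(j in T) frob (X j).
  by rewrite /t mulrC divfK // pnatr_eq0 -lt0n.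
have t_ge0 : 0 <= t by rewrite divr_ge0.
have WT_le_t j : j \in W :\: T -> frob (X j) <= t.
  move=> jWT; rewrite /t ler_pdivlMr ?ltr0n // mulr_natr -cardT -sumr_const.
  by apply: ler_sum => i iT; exact: T_top.
have sumW : \sum_(j in W) frob (X j) =
    \sum_(j in T) frob (X j) + \sum_(j in W :\: T) frob (X j).
  by rewrite (big_setID T) /= (finset.setIidPr TW).
have [WTk|kWT] := leqP #|W :\: T| k.
  apply: le_trans (mxsubnorm_dominated WTk t_ge0 WT_le_t) _.
  by rewrite kt ler_wpM2l // sumW lerDl.
have [T' [T'WT cardT' T'_top]] := topk_subset (fun j => frob (X j)) (ltnW kWT).
have T'_le_t j : j \in T' -> frob (X j) <= t.
  by move=> jT'; apply: WT_le_t; exact: (fintype.subsetP T'WT).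
apply: le_trans (ler_wpM2r (sqrtr_ge0 _) (mxsubnorm_setID G J X T'WT)) _.
rewrite mulrDl sumW mulrDr -kt; apply: lerD.
  exact: mxsubnorm_dominated (eq_leq cardT') t_ge0 T'_le_t.
apply: IHn => //; last by rewrite (minn_idPl (ltnW kWT)).
rewrite cardsD (finset.setIidPr TW) cardT; move: cardW kW k_gt0; clear; lia.
Qed.

End Shelling.

Section ConeArithmetic.
Variables (R : realFieldType) (s k mu sM sg x A Z : R).
Hypotheses (s_gt0 : 0 < s) (mu_gt0 : 0 < mu) (sM_gt0 : 0 < sM).
Hypotheses (A_ge0 : 0 <= A) (x_ge0 : 0 <= x) (Z_ge0 : 0 <= Z).
Hypotheses (sg_ge : 3 / 4 * (mu * sM) <= sg) (k_ge : 8 * s <= k * mu ^+ 2).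
Hypothesis AX : A ^+ 2 <= s * x ^+ 2.

Let sg_ge0 : 0 <= sg.
Proof. by apply: le_trans sg_ge; apply: mulr_ge0; [lra | rewrite mulr_ge0 ?ltW]. Qed.

Lemma cone_tail_le_half : Z ^+ 2 * k <= sM ^+ 2 * A ^+ 2 -> Z <= sg * x / 2.
Proof.
move=> ZA; have mu2_gt0 : 0 < mu ^+ 2 by rewrite exprn_gt0.
have sgx2 : 9 / 16 * (mu ^+ 2 * sM ^+ 2 * x ^+ 2) <= (sg * x) ^+ 2.
  have -> : 9 / 16 * (mu ^+ 2 * sM ^+ 2 * x ^+ 2) = (3 / 4 * (mu * sM)) ^+ 2 * x ^+ 2.
    by field.
  rewrite [(sg * x) ^+ 2]exprMn ler_wpM2r ?sqr_ge0 // ler_sqr ?nnegrE ?sg_ge0 //.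
  by apply: mulr_ge0; [lra | rewrite mulr_ge0 ?ltW].
have Z8 : 8 * Z ^+ 2 <= mu ^+ 2 * sM ^+ 2 * x ^+ 2.
  rewrite -(ler_pM2l s_gt0).
  have := ler_wpM2l (sqr_ge0 Z) k_ge.
  have := ler_wpM2r (ltW mu2_gt0) ZA.
  have := ler_wpM2l (mulr_ge0 (sqr_ge0 sM) (ltW mu2_gt0)) AX.
  nra.
by rewrite -ler_sqr ?nnegrE ?divr_ge0 ?mulr_ge0 ?sg_ge0 //; nra.
Qed.

Lemma cone_l1_arith (Y B lam c5 : R) :
  0 <= Y -> 0 <= lam -> 0 < c5 -> c5 <= sM ->
  Y ^+ 2 <= 16 * s / mu ^+ 2 * lam ^+ 2 -> sg * x <= Y + Z ->
  Z ^+ 2 * k <= sM ^+ 2 * A ^+ 2 -> B <= A ->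
  A + B <= 64 / 3 / c5 * s / mu ^+ 2 * lam.
Proof.
move=> Y_ge0 lam_ge0 c5_gt0 c5_le Ylam XYZ ZA BA.
have sgx_le : sg * x <= 2 * Y by have := cone_tail_le_half ZA; lra.
have sgA : sg * A <= 8 * s * lam / mu.
  have rhs_ge0 : 0 <= 8 * s * lam / mu.
    apply: divr_ge0 (ltW mu_gt0); apply: mulr_ge0 lam_ge0.
    by apply: mulr_ge0 (ltW s_gt0); lra.
  have sgA_ge0 : 0 <= sg * A by rewrite mulr_ge0 ?sg_ge0.
  rewrite -ler_sqr ?nnegrE //.
  have sgAx : (sg * A) ^+ 2 <= s * (sg * x) ^+ 2.
    by rewrite !exprMn; have := ler_wpM2l (sqr_ge0 sg) AX; nra.
  have sgxY : (sg * x) ^+ 2 <= (2 * Y) ^+ 2.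
    by rewrite ler_sqr ?nnegrE ?mulr_ge0 ?sg_ge0.
  have -> : (8 * s * lam / mu) ^+ 2 = 4 * (s * (16 * s / mu ^+ 2 * lam ^+ 2)).
    by field; rewrite gt_eqF.
  have := ler_wpM2l (ltW s_gt0) sgxY; have := ler_wpM2l (ltW s_gt0) Ylam.
  lra.
rewrite -(ler_pM2l (mulr_gt0 mu_gt0 c5_gt0)).
have -> : mu * c5 * (64 / 3 / c5 * s / mu ^+ 2 * lam) = 8 / 3 * (8 * s * lam / mu).
  by field; rewrite !gt_eqF.
have := ler_wpM2r A_ge0 sg_ge.
have := ler_wpM2r A_ge0 (ler_wpM2l (ltW mu_gt0) c5_le).
have := ler_wpM2l (ltW (mulr_gt0 mu_gt0 c5_gt0)) BA.
lra.
Qed.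

End ConeArithmetic.

Section ConeBound.
Variables (R : realType) (q p d dt : nat) (G : 'I_q -> 'I_p -> 'M[R]_(d, d)).
Variables (h : 'I_p -> 'M[R]_(d, dt)) (S : {set 'I_p}) (mu c5 lam : R).
Hypotheses (d_gt0 : (0 < d)%N) (mu_gt0 : 0 < mu) (c5_gt0 : 0 < c5) (lam_ge0 : 0 <= lam).
Local Notation s := #|S|.
Local Notation m := (16 * s%:R / mu ^+ 2).
Local Notation sM := (sigma_max_m m G).
Local Notation sm := (sigma_min_m m G).
Hypotheses (sM_ge : c5 <= sM) (ratio_ge : mu <= sm / sM).

Let m_ge0 : 0 <= m.
Proof. by rewrite divr_ge0 ?sqr_ge0 // mulr_ge0. Qed.

Let sM_gt0 : 0 < sM.
Proof. exact: lt_le_trans sM_ge. Qed.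

Let sm_ge : mu * sM <= sm.
Proof. by rewrite -ler_pdivlMr // sM_gt0. Qed.

(* An empty support would leave no column sets in sigma_min_m, and inf set0 = 0. *)
Lemma support_gt0 : (0 < s)%N /\ mu <= 1.
Proof.
have sm_gt0 : 0 < sm by apply: lt_le_trans sm_ge; rewrite mulr_gt0 ?sM_gt0.
split.
  have [M [M_gt0 Mm]] := sigma_min_m_gt0_support sm_gt0.
  rewrite lt0n; apply/eqP => s0; move: Mm; rewrite s0 mulr0 mul0r leNgt.
  by rewrite ltr0n M_gt0.
have := le_trans sm_ge (sigma_min_m_le_max m_ge0 d_gt0 sm_gt0).
by rewrite -[X in _ <= X]mul1r ler_pM2r // sM_gt0.
Qed.

Lemma shell_width : exists k : nat,
  [/\ (0 < k)%N, 8 * s%:R <= k%:R * mu ^+ 2 & (s + k)%:R <= m].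
Proof.
have [s_gt0 mu_le1] := support_gt0.
have u_ge0 : 0 <= 8 * s%:R / mu ^+ 2 :> R by rewrite divr_ge0 ?sqr_ge0 // mulr_ge0.
exists (Num.truncn (8 * s%:R / mu ^+ 2 : R)).+1.
have /andP[trunc_le lt_k] := truncn_itv u_ge0.
have mu2_gt0 : 0 < mu ^+ 2 by rewrite exprn_gt0.
split => //; first by rewrite -ler_pdivrMr // ltW.
have s_le_u : s%:R <= s%:R / mu ^+ 2 :> R.
  have : mu ^+ 2 <= 1 by rewrite expr_le1 // ltW.
  by rewrite ler_pdivlMr //; have := ler0n R s; nra.
have s_ge1 : 1 <= s%:R :> R by rewrite ler1n.
rewrite natrD -addn1 natrD; lra.
Qed.

Lemma sv_min_rows_ge (M : {set 'I_p}) : (0 < #|M|)%N -> #|M|%:R <= m ->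
  exists2 J : {set 'I_q}, #|J|%:R <= m & 3 / 4 * (mu * sM) <= sv_min G J M.
Proof.
move=> M_gt0 Mm; have eps_gt0 : 0 < mu * sM / 4 by rewrite divr_gt0 ?mulr_gt0 ?sM_gt0.
have [J Jm sv_gt] := sv_min_rows_approx G m_ge0 M eps_gt0.
by exists J => //; have := sigma_min_m_le_sup G M_gt0 Mm; have := sm_ge; lra.
Qed.

Lemma shell_tail_bound k (J : {set 'I_q}) (T : {set 'I_p}) :
  (0 < k)%N -> (s + k)%:R <= m -> #|J|%:R <= m ->
  T \subset ~: S -> #|T| = minn k #|~: S| ->
  (forall i j, i \in T -> j \in ~: S :\: T -> frob (h j) <= frob (h i)) ->
  mxsubnorm G J (~: (S :|: T)) h * Num.sqrt k%:R <= sM * \sum_(j in ~: S) frob (h j).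
Proof.
move=> k_gt0 sk_le_m Jm TS cardT T_top.
have sparse_gain (V : {set 'I_p}) : (#|V| <= k)%N -> mxsubnorm G J V h <= sM * mxvnorm V h.
  move=> Vk; apply: le_trans (sv_max_mxmul G J V h) _.
  rewrite ler_wpM2r ?mxvnorm_ge0 // sv_max_le_sigma_max_m //.
  by apply: le_trans sk_le_m; rewrite ler_nat (leq_trans Vk) ?leq_addl.
rewrite finset.setCU -finset.setDE.
by apply: (mxsubnorm_tail k_gt0 (ltW sM_gt0) sparse_gain TS cardT).
Qed.

Hypothesis cone : \sum_(j in ~: S) frob (h j) <= \sum_(j in S) frob (h j).
Hypothesis residual : forall i, frob (\sum_j G i j *m h j) <= lam.

Lemma cone_l1_bound : \sum_j frob (h j) <= 64 / 3 / c5 * s%:R / mu ^+ 2 * lam.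
Proof.
have [s_gt0 _] := support_gt0.
have [k [k_gt0 k_ge sk_le_m]] := shell_width.
have [T [TS cardT T_top]] := topk_subset (fun j => frob (h j)) (geq_minr k #|~: S|).
set M := S :|: T.
have Mm : #|M|%:R <= m.
  apply: le_trans sk_le_m; rewrite ler_nat.
  by apply: leq_trans (leq_card_setU S T) _; rewrite leq_add2l cardT geq_minl.
have M_gt0 : (0 < #|M|)%N.
  exact: leq_trans s_gt0 (subset_leq_card (finset.subsetUl S T)).
have [J Jm sg_ge] := sv_min_rows_ge M_gt0 Mm.
set A := \sum_(j in S) frob (h j); set B := \sum_(j in ~: S) frob (h j).
have A_ge0 : 0 <= A by apply: sumr_ge0 => j _; exact: frob_ge0.
have AX := sqr_sum_frob_le_mxvnorm h (finset.subsetUl S T).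
have Ylam : mxsubnorm G J [set: 'I_p]%SET h ^+ 2 <= m * lam ^+ 2.
  exact: le_trans (mxsubnorm_setT_sqr_le J lam_ge0 residual) (ler_wpM2r (sqr_ge0 _) Jm).
have XYZ := le_trans (sv_min_mxmul G J M h) (mxsubnorm_setC G J M h).
have ZA : mxsubnorm G J (~: M) h ^+ 2 * k%:R <= sM ^+ 2 * A ^+ 2.
  have ZB := shell_tail_bound k_gt0 sk_le_m Jm TS cardT T_top.
  rewrite -[k%:R](@sqr_sqrtr _ k%:R) ?ler0n // -!exprMn ler_sqr ?nnegrE.
  - by apply: le_trans ZB _; rewrite ler_wpM2l // ltW // sM_gt0.
  - by rewrite mulr_ge0 ?mxsubnorm_ge0 ?sqrtr_ge0.
  - by rewrite mulr_ge0 // ltW // sM_gt0.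
have -> : \sum_j frob (h j) = A + B.
  by rewrite (bigID (mem S)) /=; congr (_ + _); apply: eq_bigl => j; rewrite finset.in_setC.
apply: (cone_l1_arith _ _ _ A_ge0 _ _ sg_ge k_ge AX _ lam_ge0 c5_gt0 sM_ge Ylam XYZ ZA cone).
- by rewrite ltr0n.
- by [].
- exact: sM_gt0.
- exact: mxvnorm_ge0.
- exact: mxsubnorm_ge0.
- exact: mxsubnorm_ge0.
Qed.

End ConeBound.

Lemma probability_setI_ge (R : realType) (dsp : measure_display) (T : measurableType dsp)
    (P : probability T R) (A B : set T) (a b : R) :
  measurable A -> measurable B -> (a%:E <= P A)%E -> (b%:E <= P B)%E ->
  ((a + b - 1)%:E <= P (A `&` B))%E.
Proof.
move=> mA mB PA PB.
have P_fin X : measurable X -> P X = (fine (P X))%:E.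
  move=> mX; rewrite fineK // ge0_fin_numE ?measure_ge0 //.
  by rewrite (le_lt_trans (probability_le1 P mX)) ?ltry.
have PU : (P A + P B - P (A `&` B) <= 1)%E.
  rewrite -measureUfinl //; first exact: probability_le1 (measurableU _ _ mA mB).
  exact: le_lt_trans (probability_le1 P mA) (ltry _).
move: PA PB PU; rewrite (P_fin _ mA) (P_fin _ mB) (P_fin _ (measurableI _ _ mA mB)).
move=> PA PB PU.
have : ((fine (P A) + fine (P B) - fine (P (A `&` B)))%:E <= 1%:E)%E := PU.
by rewrite !lee_fin in PA PB *; lra.
Qed.

Section RMDError.
Variables (R : realType) (p d dt : nat).
Implicit Types (th : 'I_p -> 'M[R]_(d, dt)).

Lemma cone_of_bnorm1_le th th0 : bnorm1 th <= bnorm1 th0 ->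
  \sum_(j in ~: bsupp th0) frob (th j - th0 j) <= \sum_(j in bsupp th0) frob (th j - th0 j).
Proof.
set S := bsupp th0 => le_th.
have th0_off j : j \in ~: S -> th0 j = 0.
  by rewrite finset.in_setC inE negbK => /eqP; exact: frob_eq0.
have split_sum (f : 'I_p -> R) : \sum_j f j = \sum_(j in S) f j + \sum_(j in ~: S) f j.
  by rewrite (bigID (mem S)) /=; congr (_ + _); apply: eq_bigl => j; rewrite finset.in_setC.
have off : \sum_(j in ~: S) frob (th j - th0 j) = \sum_(j in ~: S) frob (th j).
  by apply: eq_bigr => j jS; rewrite th0_off // subr0.
have off0 : \sum_(j in ~: S) frob (th0 j) = 0.
  by apply: big1 => j jS; rewrite th0_off // frob0.
have on : \sum_(j in S) frob (th0 j) <=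
    \sum_(j in S) frob (th j) + \sum_(j in S) frob (th j - th0 j).
  rewrite -big_split /=; apply: ler_sum => j _.
  by rewrite -{1}[th0 j](subKr (th j)); exact: frobB.
move: le_th; rewrite /bnorm1 split_sum [X in _ <= X]split_sum off0 off; lra.
Qed.

Lemma rmd_residual_le (q : nat) (G Gh : 'I_q -> 'I_p -> 'M[R]_(d, d))
    (g0 gh0 Rb : 'I_q -> 'M[R]_(d, dt)) th0 th (gamma eps1 eps2 K : R) :
  (forall i, gfun G g0 th0 i + Rb i = 0) ->
  bnormmax (gfun Gh gh0 th) <= gamma ->
  bnormmax2 (fun i j => Gh i j - G i j) <= eps1 ->
  bnormmax (fun i => gh0 i - g0 i) <= eps1 ->
  bnormmax Rb <= eps2 -> 0 <= eps1 -> bnorm1 th <= K ->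
  forall i, frob (\sum_j G i j *m (th j - th0 j)) <= gamma + eps1 * K + eps1 + eps2.
Proof.
move=> model feas dG dg dR eps1_ge0 thK i.
have -> : \sum_j G i j *m (th j - th0 j) =
    gfun Gh gh0 th i - \sum_j (Gh i j - G i j) *m th j - (gh0 i - g0 i) + Rb i.
  have := model i; rewrite /gfun /bapply.
  under [\sum_j G i j *m (th j - th0 j)]eq_bigr do rewrite mulmxBr.
  under [\sum_j (Gh i j - G i j) *m th j]eq_bigr do rewrite mulmxBl.
  rewrite !sumrB; set X := \sum_j G i j *m th j; set Y := \sum_j G i j *m th0 j.
  set Z := \sum_j Gh i j *m th j.
  by move=> /matrixP model_i; apply/matrixP => u v; have := model_i u v; rewrite !mxE; lra.
have dGth : frob (\sum_j (Gh i j - G i j) *m th j) <= eps1 * K.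
  apply: le_trans (frob_sum _ _) _; apply: le_trans (_ : \sum_j eps1 * frob (th j) <= _).
    apply: ler_sum => j _; apply: le_trans (frobM _ _) _.
    by rewrite ler_wpM2r ?frob_ge0 // (le_trans _ dG) // (le_bnormmax2 (fun i j => Gh i j - G i j)).
  by rewrite -mulr_sumr ler_wpM2l.
have := le_trans (le_bnormmax _ i) feas; have := le_trans (le_bnormmax _ i) dg.
have := le_trans (le_bnormmax _ i) dR.
have := frobD (gfun Gh gh0 th i - \sum_j (Gh i j - G i j) *m th j - (gh0 i - g0 i)) (Rb i).
have := frobB (gfun Gh gh0 th i - \sum_j (Gh i j - G i j) *m th j) (gh0 i - g0 i).
have := frobB (gfun Gh gh0 th i) (\sum_j (Gh i j - G i j) *m th j).
rewrite /=; lra.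
Qed.

Lemma rmd_l1_error (q : nat) (G Gh : 'I_q -> 'I_p -> 'M[R]_(d, d))
    (g0 gh0 Rb : 'I_q -> 'M[R]_(d, dt)) th0 th (gamma eps1 eps2 K mu c5 : R) :
  (0 < d)%N -> 0 < mu -> 0 < c5 -> 0 <= gamma -> 0 <= eps1 -> 0 <= eps2 ->
  (forall i, gfun G g0 th0 i + Rb i = 0) ->
  is_rmd Gh gh0 gamma th -> bnormmax (gfun Gh gh0 th0) <= gamma ->
  bnormmax2 (fun i j => Gh i j - G i j) <= eps1 ->
  bnormmax (fun i => gh0 i - g0 i) <= eps1 -> bnormmax Rb <= eps2 ->
  c5 <= sigma_max_m (16 * #|bsupp th0|%:R / mu ^+ 2) G ->
  mu <= sigma_min_m (16 * #|bsupp th0|%:R / mu ^+ 2) G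
        / sigma_max_m (16 * #|bsupp th0|%:R / mu ^+ 2) G ->
  bnorm1 th0 <= K ->
  bnorm1 (fun j => th j - th0 j)
    <= 64 / 3 / c5 * #|bsupp th0|%:R / mu ^+ 2 * (gamma + eps1 * K + eps1 + eps2).
Proof.
move=> d_gt0 mu_gt0 c5_gt0 gamma_ge0 eps1_ge0 eps2_ge0 model [feas opt] feas0
  dG dg dR sM_ge ratio_ge th0K.
have th_le := opt th0 feas0.
have K_ge0 := le_trans (bnorm1_ge0 th0) th0K.
apply: (cone_l1_bound (G := G)) => //; first by rewrite !addr_ge0 // mulr_ge0.
  exact: cone_of_bnorm1_le.
exact: rmd_residual_le model feas dG dg dR eps1_ge0 (le_trans th_le th0K).
Qed.
End RMDError.

Theorem theorem3 (R : realType) (c5 C1 : R) :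
  0 < c5 -> 0 <= C1 ->
  exists C2 : R, 0 < C2 /\
  forall (p d dt L : nat)
    (theta0 : 'I_p -> 'M[R]_(d, dt))
    (G : 'I_(p * L) -> 'I_p -> 'M[R]_(d, d))
    (g0 Rb : 'I_(p * L) -> 'M[R]_(d, dt))
    (dsp : measure_display) (T : measurableType dsp) (P : probability T R)
    (Gh : T -> 'I_(p * L) -> 'I_p -> 'M[R]_(d, d))
    (gh0 : T -> 'I_(p * L) -> 'M[R]_(d, dt))
    (gamma eps1 delta1 eps2 delta2 mu K : R),
    (0 < p)%N -> (0 < d)%N -> (0 < dt)%N -> (0 < L)%N ->
    (* model identity G theta0 + g(0) + R = 0 *)
    (forall i, gfun G g0 theta0 i + Rb i = 0) ->
    0 <= gamma ->
    (* (B1) *)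
    0 < eps1 -> 0 < delta1 ->
    (exists E : set T, [/\ measurable E, ((1 - delta1)%:E <= P E)%E &
       forall w, E w ->
         bnormmax2 (fun i j => Gh w i j - G i j) <= eps1 /\
         bnormmax (fun i => gh0 w i - g0 i) <= eps1]) ->
    (* (B2) *)
    0 < eps2 -> bnormmax Rb <= eps2 ->
    (* (B3) *)
    0 < delta2 ->
    (exists E : set T, [/\ measurable E, ((1 - delta2)%:E <= P E)%E &
       forall w, E w -> bnormmax (gfun (Gh w) (gh0 w) theta0) <= gamma]) ->
    (* (B4), with m = 16 s / mu^2 *)
    0 < mu ->
    c5 <= sigma_max_m (16 * (#|bsupp theta0|%:R) / mu ^+ 2) G ->
    mu <= sigma_min_m (16 * (#|bsupp theta0|%:R) / mu ^+ 2) G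
          / sigma_max_m (16 * (#|bsupp theta0|%:R) / mu ^+ 2) G ->
    (* ||theta0||_1 <= K and gamma_n <~ (K+1) eps1 + eps2 *)
    bnorm1 theta0 <= K ->
    gamma <= C1 * ((K + 1) * eps1 + eps2) ->
    exists E : set T, [/\ measurable E,
      ((1 - (delta1 + delta2))%:E <= P E)%E &
      forall w, E w ->
        forall thetah : 'I_p -> 'M[R]_(d, dt),
          is_rmd (Gh w) (gh0 w) gamma thetah ->
          bnorm1 (fun j => thetah j - theta0 j)
            <= C2 * (#|bsupp theta0|%:R) / mu ^+ 2 * ((K + 1) * eps1 + eps2)].
Proof.
move=> c5_gt0 C1_ge0; exists (64 / 3 * (C1 + 1) / c5); split.
  by rewrite divr_gt0 // mulr_gt0 //; lra.
move=> p d dt L th0 G g0 Rb dsp T P Gh gh0 gamma eps1 delta1 eps2 delta2 mu K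
  _ d_gt0 _ _ model gamma_ge0 eps1_gt0 _ [E1 [mE1 PE1 E1_dev]] eps2_gt0 Rb_le _
  [E2 [mE2 PE2 E2_feas]] mu_gt0 sM_ge ratio_ge th0K gamma_le.
exists (E1 `&` E2); split; first exact: measurableI.
  have -> : 1 - (delta1 + delta2) = 1 - delta1 + (1 - delta2) - 1 by ring.
  exact: probability_setI_ge.
move=> w [/E1_dev[dG dg] /E2_feas feas0] th rmd.
have := rmd_l1_error d_gt0 mu_gt0 c5_gt0 gamma_ge0 (ltW eps1_gt0) (ltW eps2_gt0) model
  rmd feas0 dG dg Rb_le sM_ge ratio_ge th0K.
move/le_trans; apply.
set s := #|bsupp th0|%:R; set Q := (K + 1) * eps1 + eps2.
have coef_ge0 : 0 <= 64 / 3 / c5 * s / mu ^+ 2.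
  by rewrite divr_ge0 ?sqr_ge0 // mulr_ge0 ?ler0n // divr_ge0 ?ltW //; lra.
have -> : 64 / 3 * (C1 + 1) / c5 * s / mu ^+ 2 * Q = 64 / 3 / c5 * s / mu ^+ 2 * ((C1 + 1) * Q).
  by field; rewrite !gt_eqF.
by rewrite ler_wpM2l // /Q; lra.
Qed.
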